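(* Let $\lambda >0$ and $t\ge 1$. For any $k\geq 3$, $$\Pr\big(|Z_k(t) - \mathbb{E}[Z_k(t)]| \geq \lambda\big) \leq 2e^{-\frac{\lambda^2}{72t}},$$ where $Z_k(t)$ is the number of vertices of degree $k$ in a Random Apollonian Network after $t$ steps.
   Context: A Random Apollonian Network (RAN) is generated as follows: start (at time $t=0$) with a single triangular face. At each step $t=1,2,\dots$, pick one of the current (bounded) triangular faces uniformly at random, insert a new vertex inside it, and connect it to the three vertices on the boundary of that face, subdividing the face into three new triangular faces. $Z_k(t)$ denotes the number of vertices of degree exactly $k$ after $t$ steps. *)

From HB Require Import structures.
From mathcomp Require Import all_boot all_order all_algebra.
From mathcomp Require Import reals sequences exp.
Set Implicit Arguments. Unset Strict Implicit. Unset Printing Implicit Defensive.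
Import Order.TTheory GRing.Theory Num.Theory.

(* Vertices are natural numbers: 0,1,2 are the initial triangle, the vertex
   inserted at step s (s = 0,...,t-1, i.e. the (s+1)-th step) is s+3.
   A state is (list of bounded triangular faces, list of edges). *)
Definition face := (nat * nat * nat)%type.
Definition ran_state := (seq face * seq (nat * nat))%type.

Definition ran_init : ran_state :=
  ([:: (0, 1, 2)], [:: (0, 1); (1, 2); (0, 2)]).

Definition ran_step (st : ran_state) (v i : nat) : ran_state :=
  let fs := st.1 in
  let: (a, b, c) := nth (0, 0, 0) fs i in
  (take i fs ++ drop i.+1 fs ++ [:: (a, b, v); (b, c, v); (a, c, v)],
   [:: (a, v); (b, v); (c, v)] ++ st.2).

(* Run the process from a sequence of face choices (choice at step s is
   the index of the face chosen among the 2s+1 current faces). *)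
Definition ran_run (cs : seq nat) : ran_state :=
  foldl (fun st p => ran_step st (p.1 + 3) p.2) ran_init
        (zip (iota 0 (size cs)) cs).

(* Sample space after t steps: choice functions with f s < 2s+1 (the number
   of bounded faces before step s+1); the uniform measure on it is exactly
   the law of the RAN process. *)
Definition ran_omega (t : nat) : {set {ffun 'I_t -> 'I_(2 * t)}} :=
  [set f : {ffun 'I_t -> 'I_(2 * t)} | [forall s : 'I_t, (f s < (2 * s).+1)%N]].

Definition ran_choices t (f : {ffun 'I_t -> 'I_(2 * t)}) : seq nat :=
  [seq nat_of_ord (f s) | s <- enum 'I_t].

Definition degree (v : nat) (es : seq (nat * nat)) : nat :=
  count (fun e => (e.1 == v) || (e.2 == v)) es.

Definition Zk (k t : nat) (f : {ffun 'I_t -> 'I_(2 * t)}) : nat :=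
  let es := (ran_run (ran_choices f)).2 in
  count (fun v => degree v es == k) (iota 0 (t + 3)).

Local Open Scope ring_scope.

Definition ran_expect (R : realType) (k t : nat) : R :=
  (\sum_(f in ran_omega t) (Zk k f)%:R) / (#|ran_omega t|)%:R.

Definition ran_prob (R : realType) (t : nat)
  (E : {ffun 'I_t -> 'I_(2 * t)} -> bool) : R :=
  (#|[set f in ran_omega t | E f]|)%:R / (#|ran_omega t|)%:R.

From HB Require Import structures.
From mathcomp Require Import all_boot all_order all_algebra.
From mathcomp Require Import reals sequences exp.
From mathcomp Require Import ring lra zify.
Import Order.TTheory GRing.Theory Num.Theory.
Set Implicit Arguments. Unset Strict Implicit. Unset Printing Implicit Defensive.

(* Reveal the face choices one step at a time; the conditional expectations of Z_k form a
   Doob martingale.  Two different choices x, y at the same step can be coupled: match every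
   other face with itself, and the faces later created inside x with those created inside y.
   The coupled runs then differ only at the six corners of x and y, so every martingale
   increment is at most 6, and the Azuma-Hoeffding inequality gives
   exp (- lam^2 / (2 * 6^2 * t)). *)

Section ExpBounds.
Variable R : realType.
Local Open Scope ring_scope.

(* Write [expR x = expR (x / 4) ^+ 4 <= (1 - x / 4) ^- 4]; the quartic factor
   below is nonnegative on [[-2/3, 2/3]]. *)
Lemma expR_le_1Dx_sqr (x : R) : `|x| <= 2 / 3 -> expR x <= 1 + x + x ^+ 2.
Proof.
rewrite ler_norml => /andP[xlo xhi].
have x4_lt1 : 0 < 1 - x / 4 by lra.
have expR_x4 : expR (x / 4) <= (1 - x / 4)^-1.
  rewrite -[(1 - x / 4)^-1]div1r ler_pdivlMr //.
  have := ler_wpM2l (expR_ge0 (x / 4)) (expR_ge1Dx (- (x / 4))).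
  by rewrite expRN mulfV ?gt_eqF ?expR_gt0.
have quartic_ge0 : 0 <= 96 - 176 * x + 81 * x ^+ 2 - 15 * x ^+ 3 + x ^+ 4.
  have : 0 <= (2 / 3 - x) * (5 / 3 - x) by nra.
  have : 0 <= x ^+ 2 * (10 - 15 * x) by nra.
  have : 0 <= x ^+ 4 by rewrite exprn_even_ge0.
  nra.
have poly_ge1 : 1 <= (1 + x + x ^+ 2) * (1 - x / 4) ^+ 4.
  have -> : (1 + x + x ^+ 2) * (1 - x / 4) ^+ 4 =
      1 + x ^+ 2 * (96 - 176 * x + 81 * x ^+ 2 - 15 * x ^+ 3 + x ^+ 4) / 256 by field.
  by rewrite lerDl divr_ge0 // mulr_ge0 // sqr_ge0.
have -> : x = 4%:R * (x / 4) by field.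
rewrite expRM_natl; apply: (le_trans (lerXn2r _ _ _ expR_x4)).
- by rewrite nnegrE expR_ge0.
- by rewrite nnegrE invr_ge0 ltW.
rewrite exprVn -div1r ler_pdivrMr ?exprn_gt0 //.
by have -> : 4 * (x / 4) = x :> R by field.
Qed.

(* Hoeffding's lemma for the uniform distribution on [n] points whose values
   lie within [c] of each other (with the crude constant [1/2] in place of [1/8]). *)
Lemma hoeffding_uniform n (a : 'I_n -> R) (c h : R) : (0 < n)%N ->
  (forall i j, `|a i - a j| <= c) -> `|h| * c <= 2 / 3 ->
  (\sum_i expR (h * (a i - (\sum_j a j) / n%:R))) / n%:R <= expR (h ^+ 2 * c ^+ 2 / 2).
Proof.
move=> n_gt0 a_diff hc.
set N := n%:R; have N_gt0 : 0 < N by rewrite ltr0n.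
set y := fun i => a i - (\sum_j a j) / N.
have y_sum : \sum_i y i = 0.
  by rewrite /y sumrB sumr_const card_ord -mulr_natr -/N; field; rewrite gt_eqF.
have y_diff i j : y i - y j = a i - a j by rewrite /y; ring.
have y_bound i : `|y i| <= c.
  have -> : y i = (\sum_j (y i - y j)) / N.
    by rewrite sumrB y_sum subr0 sumr_const card_ord -mulr_natr mulfK // gt_eqF.
  rewrite normrM [`|N^-1|]ger0_norm ?invr_ge0 ?(ltW N_gt0) // ler_pdivrMr //.
  apply: le_trans (ler_norm_sum _ _ _) _.
  apply: le_trans (_ : \sum_(j < n) c <= _); first by apply: ler_sum => j _; rewrite y_diff.
  by rewrite sumr_const card_ord mulr_natr.
set S2 := \sum_i y i ^+ 2.
have S2_bound : S2 <= c ^+ 2 / 2 * N.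
  have row_sum i : \sum_j (y i - y j) ^+ 2 = N * y i ^+ 2 + S2.
    rewrite (eq_bigr (fun j => y i ^+ 2 + (- (2 * y i)) * y j + y j ^+ 2)) => [|j _]; last by ring.
    rewrite !big_split /= sumr_const card_ord -mulr_sumr y_sum -/S2.
    by rewrite -[y i ^+ 2 *+ n]mulr_natl -/N; ring.
  have pair_sum : \sum_i \sum_j (y i - y j) ^+ 2 = 2 * N * S2.
    rewrite (eq_bigr _ (fun i _ => row_sum i)) big_split /= sumr_const card_ord.
    by rewrite -mulr_sumr -/S2 -[S2 *+ n]mulr_natl -/N; ring.
  have pair_le : \sum_i \sum_j (y i - y j) ^+ 2 <= c ^+ 2 * N * N.
    apply: le_trans (_ : \sum_(i < n) \sum_(j < n) c ^+ 2 <= _).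
      apply: ler_sum => i _; apply: ler_sum => j _.
      by rewrite -real_normK ?num_real // y_diff !expr2 ler_pM ?normr_ge0 ?a_diff.
    by rewrite !sumr_const !card_ord -mulrnA -[c ^+ 2 *+ (n * n)]mulr_natr natrM mulrA.
  rewrite pair_sum in pair_le; rewrite -(ler_pM2l N_gt0); lra.
rewrite ler_pdivrMr //.
apply: le_trans (_ : \sum_i (1 + h * y i + h ^+ 2 * y i ^+ 2) <= _).
  apply: ler_sum => i _; rewrite -exprMn; apply: expR_le_1Dx_sqr.
  by rewrite normrM; apply: le_trans hc; rewrite ler_wpM2l ?normr_ge0 ?y_bound.
rewrite !big_split /= sumr_const card_ord -!mulr_sumr y_sum -/S2 -[1 *+ n]mulr_natl -/N.
have := ler_wpM2l (sqr_ge0 h) S2_bound.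
have := ler_wpM2r (ltW N_gt0) (expR_ge1Dx (h ^+ 2 * c ^+ 2 / 2)).
lra.
Qed.

Lemma indicator_le_expR (lam h x : R) : 0 <= h ->
  (nat_of_bool (lam <= `|x|))%:R <= expR (- (h * lam)) * (expR (h * x) + expR (- h * x)).
Proof.
move=> h_ge0.
have [lam_le|_] := lerP lam `|x|; last by rewrite mulr_ge0 ?addr_ge0 ?expR_ge0.
have one_le_expR (y : R) : 0 <= y -> 1 <= expR y.
  by move=> y_ge0; apply: le_trans (expR_ge1Dx y); lra.
rewrite /= mulrDr -!expRD.
move: lam_le; rewrite ler_normr => /orP[] /(ler_wpM2l h_ge0) hx.
- have : 1 <= expR (- (h * lam) + h * x) by apply: one_le_expR; lra.
  by have := expR_ge0 (- (h * lam) + - h * x); lra.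
- have : 1 <= expR (- (h * lam) + - h * x) by apply: one_le_expR; rewrite mulNr; lra.
  by have := expR_ge0 (- (h * lam) + h * x); lra.
Qed.
End ExpBounds.

Section UniformAverage.
Variables (R : realType) (b : nat -> nat).
Hypothesis b_gt0 : forall s, (0 < b s)%N.
Local Open Scope ring_scope.

(* [avg n s G] is the mean of [G] over the choice sequences [i_s :: ... :: i_(s+n-1)]
   with independent uniform [i_r < b r]; a prefix of earlier choices is encoded in [G],
   so [avg] is also the conditional expectation given that prefix. *)
Fixpoint avg n s (G : seq nat -> R) : R :=
  if n is n'.+1 then (\sum_(i < b s) avg n' s.+1 (fun cs => G ((i : nat) :: cs))) / (b s)%:R
  else G [::].

Lemma ler_avg n s (G G' : seq nat -> R) :
  (forall cs, G cs <= G' cs) -> avg n s G <= avg n s G'.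
Proof.
elim: n s G G' => [|n IHn] s G G' le_GG' /=; first exact: le_GG'.
by rewrite ler_wpM2r ?invr_ge0 ?ler0n // ler_sum // => i _; apply: IHn.
Qed.

Lemma eq_avg n s (G G' : seq nat -> R) : G =1 G' -> avg n s G = avg n s G'.
Proof. by move=> eq_GG'; apply/le_anti; rewrite !ler_avg // => cs; rewrite eq_GG'. Qed.

Lemma avgZ n s c (G : seq nat -> R) : avg n s (fun cs => c * G cs) = c * avg n s G.
Proof.
elim: n s G => [|n IHn] s G //=.
by rewrite mulrA mulr_sumr; congr (_ / _); apply: eq_bigr => i _; apply: IHn.
Qed.

Lemma avgD n s (G G' : seq nat -> R) :
  avg n s (fun cs => G cs + G' cs) = avg n s G + avg n s G'.
Proof.
elim: n s G G' => [|n IHn] s G G' //=.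
by rewrite -mulrDl -big_split; congr (_ / _); apply: eq_bigr => i _; apply: IHn.
Qed.

Lemma avg_cst n s c : avg n s (fun _ => c) = c.
Proof.
elim: n s => [|n IHn] s //=; under eq_bigr do rewrite IHn.
by rewrite sumr_const card_ord -[c *+ _]mulr_natr mulfK // pnatr_eq0 -lt0n.
Qed.

Fixpoint bounded_diffs (c : R) n s (G : seq nat -> R) : Prop :=
  if n is n'.+1 then
    (forall i j : 'I_(b s), `|avg n' s.+1 (fun cs => G ((i : nat) :: cs))
                              - avg n' s.+1 (fun cs => G ((j : nat) :: cs))| <= c)
    /\ forall i : 'I_(b s), bounded_diffs c n' s.+1 (fun cs => G ((i : nat) :: cs))
  else True.

Lemma avg_expR_dev_le c n s G h : bounded_diffs c n s G -> `|h| * c <= 2 / 3 ->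
  avg n s (fun cs => expR (h * (G cs - avg n s G))) <= expR (h ^+ 2 * c ^+ 2 / 2 * n%:R).
Proof.
elim: n s G => [|n IHn] s G; first by rewrite /= subrr !mulr0 expR0.
move=> [diffs_G bounded_next] hc.
set Gi := fun (i : 'I_(b s)) cs => G ((i : nat) :: cs).
set W := avg n.+1 s G.
have W_mean : W = (\sum_i avg n s.+1 (Gi i)) / (b s)%:R by [].
have step i : avg n s.+1 (fun cs => expR (h * (Gi i cs - W)))
    <= expR (h * (avg n s.+1 (Gi i) - W)) * expR (h ^+ 2 * c ^+ 2 / 2 * n%:R).
  rewrite (@eq_avg _ _ _ (fun cs => expR (h * (avg n s.+1 (Gi i) - W))
                                    * expR (h * (Gi i cs - avg n s.+1 (Gi i))))).
    by rewrite avgZ ler_wpM2l ?expR_ge0 //; apply: IHn; first exact: bounded_next.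
  by move=> cs; rewrite -expRD; congr expR; ring.
rewrite [avg n.+1 s _]/=.
apply: le_trans (_ : (\sum_i expR (h * (avg n s.+1 (Gi i) - W))
                        * expR (h ^+ 2 * c ^+ 2 / 2 * n%:R)) / (b s)%:R <= _).
  by rewrite ler_wpM2r ?invr_ge0 ?ler0n //; apply: ler_sum => i _; apply: step.
rewrite -mulr_suml mulrAC -[n.+1]addn1 natrD mulrDr mulr1 addrC expRD.
rewrite ler_wpM2r ?expR_ge0 // W_mean.
exact: hoeffding_uniform.
Qed.

Lemma avg_large_dev_eq0 n s G M lam : (forall cs, 0 <= G cs <= M) -> M < lam ->
  avg n s (fun cs => (nat_of_bool (lam <= `|G cs - avg n s G|))%:R) = 0.
Proof.
move=> G_range M_lt.
have mean_range : 0 <= avg n s G <= M.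
  rewrite -{1}(avg_cst n s 0) -(avg_cst n s M).
  by rewrite !ler_avg // => cs; case/andP: (G_range cs).
rewrite -[RHS](avg_cst n s 0); apply: eq_avg => cs; case: (lerP lam) => //= lam_le.
have : `|G cs - avg n s G| <= M.
  by case/andP: (G_range cs) => ? ?; case/andP: mean_range => ? ?; rewrite ler_norml; lra.
lra.
Qed.

(* Chernoff bound with [h = lam / (c ^+ 2 * n)]; the hypothesis [lam <= 2/3 * c * n]
   keeps [h] in the range of [expR_le_1Dx_sqr]. *)
Lemma avg_dev_tail c n s G lam :
  0 < c -> (0 < n)%N -> 0 < lam -> lam <= 2 / 3 * c * n%:R -> bounded_diffs c n s G ->
  avg n s (fun cs => (nat_of_bool (lam <= `|G cs - avg n s G|))%:R)
    <= 2 * expR (- lam ^+ 2 / (2 * c ^+ 2 * n%:R)).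
Proof.
move=> c_gt0 n_gt0 lam_gt0 lam_le bounded_G.
set m := avg n s G.
have cn_gt0 : 0 < c ^+ 2 * n%:R by rewrite mulr_gt0 ?exprn_gt0 ?ltr0n.
pose h := lam / (c ^+ 2 * n%:R).
have h_ge0 : 0 <= h by rewrite divr_ge0 ?ltW.
have hc : `|h| * c <= 2 / 3.
  rewrite ger0_norm // mulrAC ler_pdivrMr //.
  have := ler_wpM2r (ltW c_gt0) lam_le; lra.
apply: le_trans (@ler_avg n s _ (fun cs => expR (- (h * lam))
    * (expR (h * (G cs - m)) + expR (- h * (G cs - m)))) _) _.
  by move=> cs; apply: indicator_le_expR.
rewrite avgZ avgD.
have -> : 2 * expR (- lam ^+ 2 / (2 * c ^+ 2 * n%:R)) = expR (- (h * lam))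
    * (expR (h ^+ 2 * c ^+ 2 / 2 * n%:R) + expR ((- h) ^+ 2 * c ^+ 2 / 2 * n%:R)).
  rewrite sqrrN mulrDr -expRD.
  have -> : - (h * lam) + h ^+ 2 * c ^+ 2 / 2 * n%:R = - lam ^+ 2 / (2 * c ^+ 2 * n%:R).
    by rewrite /h; field; rewrite pnatr_eq0 -lt0n n_gt0 gt_eqF.
  ring.
by rewrite ler_wpM2l ?expR_ge0 // lerD // avg_expR_dev_le // normrN.
Qed.
End UniformAverage.

Definition split_face (x : face) (v : nat) : seq face :=
  let: (a, b, c) := x in [:: (a, b, v); (b, c, v); (a, c, v)].

Definition new_edges (x : face) (v : nat) : seq (nat * nat) :=
  let: (a, b, c) := x in [:: (a, v); (b, v); (c, v)].

Lemma size_split_face x v : size (split_face x v) = 3.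
Proof. by case: x => [[? ?] ?]. Qed.

Lemma ran_stepE st v i : ran_step st v i =
  (take i st.1 ++ drop i.+1 st.1 ++ split_face (nth (0, 0, 0) st.1 i) v,
   new_edges (nth (0, 0, 0) st.1 i) v ++ st.2).
Proof. by rewrite /ran_step; case: nth => [[a b] c]. Qed.

Lemma size_ran_step st v i : (i < size st.1)%N ->
  size (ran_step st v i).1 = (size st.1).+2.
Proof.
move=> lt_i; rewrite ran_stepE /= !size_cat size_takel ?(ltnW lt_i) // size_drop.
by rewrite size_split_face; lia.
Qed.

Definition ran_run_from (st : ran_state) (s : nat) (cs : seq nat) : ran_state :=
  foldl (fun st p => ran_step st (p.1 + 3) p.2) st (zip (iota s (size cs)) cs).

Lemma perm_rem (T : eqType) (x : T) s1 s2 :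
  perm_eq s1 s2 -> perm_eq (rem x s1) (rem x s2).
Proof. by move=> eq12; apply/permP => P; rewrite !count_rem (perm_mem eq12) (permP eq12). Qed.

Lemma perm_take_drop_rem (T : eqType) (s : seq T) i x0 : (i < size s)%N ->
  perm_eq (take i s ++ drop i.+1 s) (rem (nth x0 s i) s).
Proof.
move=> lt_i; rewrite -(perm_cons (nth x0 s i)).
apply: perm_trans (perm_to_rem (mem_nth x0 lt_i)).
by rewrite -[X in perm_eq _ X](cat_take_drop i) (drop_nth x0 lt_i) -cat1s perm_catCA.
Qed.

Section All2.
Variables (T : Type) (r : T -> T -> bool).

Lemma all2_cat s1 s2 t1 t2 : all2 r s1 t1 -> all2 r s2 t2 -> all2 r (s1 ++ s2) (t1 ++ t2).
Proof. by elim: s1 t1 => [|x s1 IH] [|y t1] //= /andP[-> /IH]; apply. Qed.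

Lemma all2_take s t i : all2 r s t -> all2 r (take i s) (take i t).
Proof. by elim: s t i => [|x s IH] [|y t] [|i] //= /andP[-> /IH]; apply. Qed.

Lemma all2_drop s t i : all2 r s t -> all2 r (drop i s) (drop i t).
Proof.
elim: s t i => [|x s IH] [|y t] // [|i] /andP[r_xy r_st] /=; first by rewrite r_xy.
exact: IH.
Qed.

Lemma all2_nth s t x0 i : all2 r s t -> (i < size s)%N -> r (nth x0 s i) (nth x0 t i).
Proof. by elim: s t i => [|x s IH] [|y t] // [|i] /andP[r_xy /IH] //=; apply. Qed.

Lemma all2_refl s : reflexive r -> all2 r s s.
Proof. by move=> r_refl; elim: s => //= x s ->; rewrite r_refl. Qed.

End All2.

Definition agree_off (D : seq nat) (u u' : nat) := (u == u') || (u \in D) && (u' \in D).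

Definition face_agree_off (D : seq nat) (x y : face) :=
  [&& agree_off D x.1.1 y.1.1, agree_off D x.1.2 y.1.2 & agree_off D x.2 y.2].

Lemma face_agree_off_refl D : reflexive (face_agree_off D).
Proof. by move=> x; rewrite /face_agree_off /agree_off !eqxx. Qed.

Lemma agree_off_eq D a a' u : agree_off D a a' -> u \notin D -> (a == u) = (a' == u).
Proof.
case/orP => [/eqP -> //|/andP[aD a'D] uD].
have neq_u w : w \in D -> (w == u) = false by move=> wD; apply: contraNF uD => /eqP <-.
by rewrite !neq_u.
Qed.

Lemma split_face_agree_off D x y v :
  face_agree_off D x y -> all2 (face_agree_off D) (split_face x v) (split_face y v).
Proof.
case: x y => [[a b] c] [[a' b'] c'] /and3P[aa' bb' cc'].
by rewrite /= /face_agree_off /= aa' bb' cc' /agree_off eqxx.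
Qed.

Lemma degree_cat u es1 es2 : degree u (es1 ++ es2) = (degree u es1 + degree u es2)%N.
Proof. exact: count_cat. Qed.

Lemma degree_new_edges_agree_off D x y v u : face_agree_off D x y -> u \notin D ->
  degree u (new_edges x v) = degree u (new_edges y v).
Proof.
case: x y => [[a b] c] [[a' b'] c'] /and3P[aa' bb' cc'] uD.
by rewrite /degree /= (agree_off_eq aa' uD) (agree_off_eq bb' uD) (agree_off_eq cc' uD).
Qed.

Lemma count_le_off (T : eqType) (P1 P2 : pred T) (D : seq T) s :
  (forall u, u \notin D -> P1 u = P2 u) -> (count P1 s <= count P2 s + count (mem D) s)%N.
Proof.
move=> eq_off; elim: s => //= x s IHs.
by case xD: (x \in D); [case: (P1 x); case: (P2 x) | rewrite eq_off ?xD]; rewrite /=; lia.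
Qed.

Lemma count_mem_uniq_le (T : eqType) (D s : seq T) : uniq s -> (count (mem D) s <= size D)%N.
Proof.
move=> s_uniq; rewrite -size_filter uniq_leq_size ?filter_uniq // => x.
by rewrite mem_filter => /andP[].
Qed.

Definition deg_count (k m : nat) (es : seq (nat * nat)) : nat :=
  count (fun v => degree v es == k) (iota 0 m).

Lemma deg_count_le k m es : (deg_count k m es <= m)%N.
Proof. by rewrite -[X in (_ <= X)%N](size_iota 0 m) count_size. Qed.

Notation ran_avg := (avg (fun s => (2 * s).+1)).

Section ConditionalExpectation.
Variables (R : realType) (k m : nat).
Local Open Scope ring_scope.

Definition cond_Z (st : ran_state) (s n : nat) : R :=
  ran_avg n s (fun cs => (deg_count k m (ran_run_from st s cs).2)%:R).

Lemma deg_count_dist D es1 es2 :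
  (forall u, u \notin D -> degree u es1 = degree u es2) ->
  `|(deg_count k m es1)%:R - (deg_count k m es2)%:R| <= (size D)%:R :> R.
Proof.
move=> eq_off.
have le_off es es' : (forall u, u \notin D -> degree u es = degree u es') ->
    (deg_count k m es)%:R <= (deg_count k m es')%:R + (size D)%:R :> R.
  move=> eq'; rewrite -natrD ler_nat.
  apply: leq_trans (@count_le_off _ _ (fun v => degree v es' == k) D _ _) _.
    by move=> u uD; rewrite eq'.
  by rewrite leq_add2l; apply/count_mem_uniq_le/iota_uniq.
have := le_off _ _ eq_off; have := le_off es2 es1 (fun u uD => esym (eq_off u uD)).
by rewrite ler_norml; lra.
Qed.

Lemma cond_ZS st s n : cond_Z st s n.+1 =
  (\sum_(i < (2 * s).+1) cond_Z (ran_step st (s + 3) i) s.+1 n) / ((2 * s).+1)%:R.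
Proof. by []. Qed.

Lemma cond_Z_perm n s fs fs' es : perm_eq fs fs' -> size fs = (2 * s).+1 ->
  cond_Z (fs, es) s n = cond_Z (fs', es) s n.
Proof.
elim: n s fs fs' es => [//|n IHn] s fs fs' es eq_fs size_fs.
have size_fs' : size fs' = (2 * s).+1 by rewrite -(perm_size eq_fs).
pose W (gs : seq face) (x : face) :=
  cond_Z (rem x gs ++ split_face x (s + 3), new_edges x (s + 3) ++ es) s.+1 n.
have sum_W gs : size gs = (2 * s).+1 ->
    \sum_(i < (2 * s).+1) cond_Z (ran_step (gs, es) (s + 3) i) s.+1 n = \sum_(x <- gs) W gs x.
  move=> size_gs; rewrite (big_nth (0, 0, 0)%N) size_gs big_mkord; apply: eq_bigr => i _.
  have lt_i : (i < size gs)%N by rewrite size_gs.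
  rewrite ran_stepE /= catA /W; apply: IHn; first by rewrite perm_cat2r perm_take_drop_rem.
  by rewrite !size_cat size_take lt_i size_drop size_split_face size_gs; lia.
rewrite !cond_ZS sum_W // sum_W // (perm_big _ eq_fs); congr (_ / _).
apply: eq_big_seq => x x_fs'; apply: IHn; first by rewrite perm_cat2r perm_rem.
rewrite size_cat size_rem ?(perm_mem eq_fs) // size_fs size_split_face; lia.
Qed.

Lemma cond_Z_couple n s D fs1 es1 fs2 es2 : all2 (face_agree_off D) fs1 fs2 ->
  (forall u, u \notin D -> degree u es1 = degree u es2) -> size fs1 = (2 * s).+1 ->
  `|cond_Z (fs1, es1) s n - cond_Z (fs2, es2) s n| <= (size D)%:R.
Proof.
elim: n s fs1 es1 fs2 es2 => [|n IHn] s fs1 es1 fs2 es2 agree_fs agree_es size_fs1.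
  exact: deg_count_dist.
rewrite !cond_ZS -mulrBl -sumrB normrM [`|_^-1|]ger0_norm ?invr_ge0 ?ler0n // ler_pdivrMr ?ltr0n //.
apply: le_trans (ler_norm_sum _ _ _) _.
apply: le_trans (_ : \sum_(i < (2 * s).+1) (size D)%:R <= _); last first.
  by rewrite sumr_const card_ord mulr_natr.
apply: ler_sum => i _; have lt_i : (i < size fs1)%N by rewrite size_fs1.
have agree_i := all2_nth (0, 0, 0)%N agree_fs lt_i.
rewrite !ran_stepE /=; apply: IHn.
- apply: all2_cat; first exact: all2_take.
  by apply: all2_cat; [exact: all2_drop | exact: split_face_agree_off].
- by move=> u uD; rewrite !degree_cat agree_es // (degree_new_edges_agree_off _ agree_i uD).
- by rewrite !size_cat size_take lt_i size_drop size_split_face size_fs1; lia.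
Qed.

Lemma cond_Z_step_diff n s st i j : size st.1 = (2 * s).+1 ->
  (i < (2 * s).+1)%N -> (j < (2 * s).+1)%N ->
  `|cond_Z (ran_step st (s + 3) i) s.+1 n - cond_Z (ran_step st (s + 3) j) s.+1 n| <= 6.
Proof.
case: st => fs es /= size_fs lt_i lt_j.
have size_rem_split z : z \in fs -> size (rem z fs ++ split_face z (s + 3)) = (2 * s.+1).+1.
  by move=> z_fs; rewrite size_cat size_rem // size_fs size_split_face; lia.
have step_rem l : (l < (2 * s).+1)%N -> cond_Z (ran_step (fs, es) (s + 3) l) s.+1 n =
    cond_Z (rem (nth (0, 0, 0)%N fs l) fs ++ split_face (nth (0, 0, 0)%N fs l) (s + 3),
            new_edges (nth (0, 0, 0)%N fs l) (s + 3) ++ es) s.+1 n.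
  move=> lt_l; have lt_l' : (l < size fs)%N by rewrite size_fs.
  have take_drop := perm_take_drop_rem (0, 0, 0)%N lt_l'.
  rewrite ran_stepE /= catA; apply: cond_Z_perm; first by rewrite perm_cat2r.
  by rewrite size_cat (perm_size take_drop) -size_cat size_rem_split ?mem_nth.
rewrite !step_rem //; set x := nth _ fs i; set y := nth _ fs j.
have x_fs : x \in fs by rewrite mem_nth ?size_fs.
have y_fs : y \in fs by rewrite mem_nth ?size_fs.
have [<-|neq_xy] := eqVneq x y; first by rewrite subrr normr0 ler0n.
(* Match the faces other than [x] and [y] identically; the two runs then only differ at
   the six corners of [x] and [y]. *)
set rest := rem y (rem x fs).
have rem_x : perm_eq (rem x fs) (y :: rest) by rewrite perm_to_rem // rem_mem // eq_sym.
have rem_y : perm_eq (rem y fs) (x :: rest).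
  rewrite -(perm_cons y); apply: (@perm_trans _ fs); first by rewrite perm_sym perm_to_rem.
  apply: perm_trans (perm_to_rem x_fs) _.
  apply: (@perm_trans _ (x :: y :: rest)); first by rewrite perm_cons.
  by apply/permP => P /=; rewrite addnCA.
rewrite (@cond_Z_perm _ _ (rem x fs ++ _) (y :: rest ++ split_face x (s + 3))); first last.
- by rewrite size_rem_split.
- by rewrite -cat_cons perm_cat2r.
rewrite (@cond_Z_perm _ _ (rem y fs ++ _) (x :: rest ++ split_face y (s + 3))); first last.
- by rewrite size_rem_split.
- by rewrite -cat_cons perm_cat2r.
pose D := [:: x.1.1; x.1.2; x.2; y.1.1; y.1.2; y.2].
have agree_xy : face_agree_off D x y by rewrite /face_agree_off /agree_off !inE !eqxx !orbT.
have agree_yx : face_agree_off D y x by rewrite /face_agree_off /agree_off !inE !eqxx !orbT.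
rewrite [6](_ : _ = (size D)%:R) //; apply: cond_Z_couple.
- rewrite /= agree_yx; apply: all2_cat; last exact: split_face_agree_off.
  exact/all2_refl/face_agree_off_refl.
- by move=> u uD; rewrite !degree_cat (degree_new_edges_agree_off _ agree_xy uD).
- by rewrite -cat_cons size_cat -(perm_size rem_x) -size_cat size_rem_split.
Qed.

Lemma ran_bounded_diffs n s st : size st.1 = (2 * s).+1 ->
  bounded_diffs (fun s => (2 * s).+1) 6 n s
    (fun cs => (deg_count k m (ran_run_from st s cs).2)%:R : R).
Proof.
elim: n s st => [//|n IHn] s st size_st; split=> [i j|i].
  exact: cond_Z_step_diff size_st (ltn_ord i) (ltn_ord j).
apply: IHn; rewrite size_ran_step size_st ?ltn_ord //; lia.
Qed.

End ConditionalExpectation.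

Section ChoiceSequences.
Variable b : nat -> nat.

Fixpoint choice_seqs n s : seq (seq nat) :=
  if n is n'.+1 then [seq i :: cs | i <- iota 0 (b s), cs <- choice_seqs n' s.+1]
  else [:: [::]].

Lemma choice_seqs_uniq n s : uniq (choice_seqs n s).
Proof.
elim: n s => [//|n IHn] s /=.
by apply: allpairs_uniq => // [|[? ?] [? ?] _ _ [-> ->]]; rewrite ?iota_uniq.
Qed.

Lemma mem_choice_seqs n s cs : (cs \in choice_seqs n s) =
  (size cs == n) && all (fun r => nth 0 cs r < b (s + r)) (iota 0 (size cs)).
Proof.
elim: n s cs => [|n IHn] s [|c cs] //=.
  by apply/negbTE/negP => /allpairsP[[? ?] [_ _]].
have shift : all (fun r => nth 0 (c :: cs) r < b (s + r)) (iota 1 (size cs)) =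
    all (fun r => nth 0 cs r < b (s.+1 + r)) (iota 0 (size cs)).
  by rewrite -[1]addn0 iotaDl all_map; apply: eq_all => r /=; rewrite add0n addnA addn1.
rewrite addn0 shift eqSS andbCA -IHn; apply/allpairsP/andP => [[[i cs'] [i_in cs'_in [-> ->]]]|].
  by rewrite mem_iota in i_in.
by move=> [c_lt cs_in]; exists (c, cs); rewrite mem_iota.
Qed.

Local Open Scope ring_scope.

Lemma avg_choice_seqs (R : realType) n s (G : seq nat -> R) :
  avg b n s G = (\sum_(cs <- choice_seqs n s) G cs) / (size (choice_seqs n s))%:R.
Proof.
elim: n s G => [|n IHn] s G /=; first by rewrite big_seq1 divr1.
under eq_bigr do rewrite IHn.
have sum_iota (F : nat -> R) : \sum_(i <- iota 0 (b s)) F i = \sum_(i < b s) F i.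
  by rewrite -(big_mkord xpredT) /index_iota subn0.
rewrite big_allpairs_dep sum_iota size_allpairs size_iota natrM -mulr_suml -mulrA -invfM.
by rewrite [(size _)%:R * _]mulrC.
Qed.

End ChoiceSequences.

Lemma nth_ran_choices t (f : {ffun 'I_t -> 'I_(2 * t)}) (i : 'I_t) :
  nth 0 (ran_choices f) i = f i.
Proof. by rewrite /ran_choices (nth_map i) ?size_enum_ord // nth_ord_enum. Qed.

Lemma size_ran_choices t (f : {ffun 'I_t -> 'I_(2 * t)}) : size (ran_choices f) = t.
Proof. by rewrite size_map size_enum_ord. Qed.

Lemma ran_choices_inj t : injective (@ran_choices t).
Proof.
move=> f g eq_fg; apply/ffunP => i; apply: val_inj.
by rewrite /= -!nth_ran_choices eq_fg.
Qed.

Lemma perm_ran_choices t :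
  perm_eq [seq ran_choices f | f in ran_omega t] (choice_seqs (fun s => (2 * s).+1) t 0).
Proof.
apply: uniq_perm; first by rewrite map_inj_uniq ?enum_uniq //; apply: ran_choices_inj.
  exact: choice_seqs_uniq.
move=> cs; rewrite mem_choice_seqs; apply/mapP/andP => [[f]|[/eqP size_cs valid_cs]].
  rewrite mem_enum inE => /forallP f_valid ->; split; first by rewrite size_ran_choices.
  apply/allP => r; rewrite size_ran_choices mem_iota add0n => /andP[_ lt_r].
  by rewrite add0n (nth_ran_choices f (Ordinal lt_r)); apply: f_valid (Ordinal lt_r).
have lt_cs (i : 'I_t) : (nth 0 cs i < (2 * i).+1)%N.
  by have := allP valid_cs i; rewrite mem_iota size_cs add0n ltn_ord => /(_ isT).
have lt_cs' (i : 'I_t) : (nth 0 cs i < 2 * t)%N.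
  by apply: leq_trans (lt_cs i) _; have := ltn_ord i; lia.
exists [ffun i => Ordinal (lt_cs' i)].
  by rewrite mem_enum inE; apply/forallP => i; rewrite ffunE lt_cs.
apply: (@eq_from_nth _ 0) => [|r]; first by rewrite size_map size_enum_ord.
by rewrite size_cs => lt_r; rewrite (nth_ran_choices _ (Ordinal lt_r)) ffunE.
Qed.

Section SampleSpace.
Variable R : realType.
Local Open Scope ring_scope.

Lemma avg_ran_omega t (G : seq nat -> R) :
  (\sum_(f in ran_omega t) G (ran_choices f)) / (#|ran_omega t|)%:R = ran_avg t 0 G.
Proof.
rewrite avg_choice_seqs -(perm_big _ (perm_ran_choices t)) big_map big_enum /=.
by rewrite cardE -(size_map (@ran_choices t)) (perm_size (perm_ran_choices t)).
Qed.

Lemma card_sep_sum (T : finType) (S : {set T}) (P : pred T) :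
  (#|[set x in S | P x]|)%:R = \sum_(x in S) (nat_of_bool (P x))%:R :> R.
Proof.
rewrite -sum1_card natr_sum big_mkcond [RHS]big_mkcond; apply: eq_bigr => x _.
by rewrite inE; case: (x \in S); case: (P x).
Qed.

Lemma ran_prob_avg t (P : pred (seq nat)) :
  @ran_prob R t (fun f => P (ran_choices f)) = ran_avg t 0 (fun cs => (nat_of_bool (P cs))%:R).
Proof.
by rewrite /ran_prob card_sep_sum (avg_ran_omega t (fun cs => (nat_of_bool (P cs))%:R)).
Qed.

Lemma ran_expect_avg k t :
  ran_expect R k t = ran_avg t 0 (fun cs => (deg_count k (t + 3) (ran_run cs).2)%:R).
Proof. exact: avg_ran_omega. Qed.

End SampleSpace.

Local Open Scope ring_scope.

Theorem mainTheorem4 (R : realType) (lam : R) (t k : nat) :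
  0 < lam -> (1 <= t)%N -> (3 <= k)%N ->
  @ran_prob R t (fun f => lam <= `|(@Zk k t f)%:R - ran_expect R k t|)
    <= 2 * expR (- (lam ^+ 2) / (72 * t%:R)).
Proof.
move=> lam_gt0 t_ge1 _.
pose Z cs : R := (deg_count k (t + 3) (ran_run cs).2)%:R.
have Z_range cs : 0 <= Z cs <= (t + 3)%:R by rewrite ler0n ler_nat deg_count_le.
rewrite (ran_prob_avg R t (fun cs => lam <= `|Z cs - ran_expect R k t|)) ran_expect_avg.
have [lam_big|lam_small] := ltrP (t + 3)%:R lam.
  by rewrite (avg_large_dev_eq0 _ _ _ Z_range lam_big) // mulr_ge0 ?expR_ge0.
rewrite [72 * _](_ : _ = 2 * 6 ^+ 2 * t%:R); last by ring.
apply: avg_dev_tail => //; last exact: ran_bounded_diffs.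
have : 1 <= t%:R :> R by rewrite ler1n.
by rewrite natrD in lam_small; lra.
Qed.
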